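(* If $p>2$ is a prime, then $P(p,2p)=P(p,p)=pO(p)$.
   Context: $O(p)$ is the multiplicative order of $2$ modulo $p$. For positive integers $m,n$, let $\mathbf{Z}_m$ be the integers modulo $m$ and $T:\mathbf{Z}_m^n\to\mathbf{Z}_m^n$, $T(a_0,\dots,a_{n-1})=(a_0+a_1,a_1+a_2,\dots,a_{n-1}+a_0)$. For $\mathbf{a}\in\mathbf{Z}_m^n$ the cycle length of $(T^k\mathbf{a})_{k\ge0}$ is the smallest positive integer $P$ such that there is $N$ with $T^{k+P}\mathbf{a}=T^k\mathbf{a}$ for all $k\ge N$. $P(m,n)$ denotes the maximum of these cycle lengths over all $\mathbf{a}\in\mathbf{Z}_m^n$. *)

From HB Require Import structures.
From mathcomp Require Import all_boot all_order all_algebra.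
Set Implicit Arguments. Unset Strict Implicit. Unset Printing Implicit Defensive.
Import GRing.Theory.
Local Open Scope ring_scope.

(* Vectors of Z_m^n, indices read cyclically: index n-1 is followed by 0. *)
Definition vec (m n : nat) := {ffun 'I_n -> 'Z_m}.

Definition Tmap (m n : nat) (a : vec m n) : vec m n :=
  [ffun i => a i + a (ordS i)].

Definition eventually_periodic (m n : nat) (a : vec m n) (P : nat) : Prop :=
  exists N : nat, forall k : nat, (N <= k)%N ->
    iter (k + P) (@Tmap m n) a = iter k (@Tmap m n) a.

Definition is_cycle_length (m n : nat) (a : vec m n) (P : nat) : Prop :=
  (0 < P)%N /\ eventually_periodic a P /\
  (forall Q : nat, (0 < Q)%N -> (Q < P)%N -> ~ eventually_periodic a Q).

(* v = P(m,n): the maximum of the cycle lengths over all a in Z_m^n. *)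
Definition is_Pmax (m n v : nat) : Prop :=
  (exists a : vec m n, is_cycle_length a v) /\
  (forall (a : vec m n) (Q : nat), is_cycle_length a Q -> (Q <= v)%N).

(* o = O(p): the multiplicative order of 2 modulo p. *)
Definition is_ord2 (p o : nat) : Prop :=
  (0 < o)%N /\ (2 ^ o)%N = 1%N %[mod p] /\
  (forall k : nat, (0 < k)%N -> (2 ^ k)%N = 1%N %[mod p] -> (o <= k)%N).

(* Write T = 1 + S, with S the cyclic shift. Over Z_p the binomial coefficients
   C(p, j), 0 < j < p, vanish, so T^p = 1 + S^p; when n divides 2p this gives
   T^(2p) = 2 T^p, and as 2^O(p) = 1 in Z_p every orbit is periodic of period
   p O(p) from step p on.  For the lower bound take the indicator a of the
   multiples of p: S^p a = a, its sum s(a) = n/p is a unit of Z_p and its first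
   moment M(a) = sum_i i a_i vanishes.  Since s(T a) = 2 s(a) and
   M(T a) = 2 M(a) - s(a), a return T^Q a = a forces 2^Q = 1 and Q s(a) = 0 in
   Z_p, so O(p) and p both divide Q; they are coprime as O(p) < p by Fermat. *)

From HB Require Import structures.
From mathcomp Require Import all_boot all_order all_algebra.
From mathcomp Require Import ring.

Set Implicit Arguments.
Unset Strict Implicit.
Unset Printing Implicit Defensive.
Import GRing.Theory.

Section CycleLength.
Variables (m n : nat).
Local Notation T := (@Tmap m n).

Lemma eventually_periodic_fixed (b : vec m n) P Q : 0 < P ->
  iter P T b = b -> eventually_periodic b Q -> iter Q T b = b.
Proof.
move=> P_gt0 fixP [N perQ].
have fixPk k : iter (P * k) T b = b.
  by elim: k => [|k IH]; rewrite ?muln0 // mulnS iterD IH fixP.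
by have := perQ (P * N) (leq_pmull _ P_gt0); rewrite addnC iterD !fixPk.
Qed.

Lemma is_Pmax_intro P (b : vec m n) : 0 < P ->
  (forall a : vec m n, eventually_periodic a P) ->
  iter P T b = b -> (forall Q, 0 < Q -> iter Q T b = b -> P %| Q) ->
  is_Pmax m n P.
Proof.
move=> P_gt0 perP fixP minP; split.
  exists b; split=> //; split=> // Q Q_gt0 ltQP.
  move/(eventually_periodic_fixed P_gt0 fixP)/(minP Q Q_gt0)/(dvdn_leq Q_gt0).
  by rewrite leqNgt ltQP.
move=> a Q [_ [_ minQ]]; rewrite leqNgt; apply/negP => ltPQ.
exact: minQ P P_gt0 ltPQ (perP a).
Qed.

End CycleLength.

Local Open Scope ring_scope.

Section IterAdditive.
Variables (V : zmodType) (f : {additive V -> V}).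

Lemma iter_raddfD k : {morph iter k f : x y / x + y}.
Proof. by move=> x y; elim: k => //= k ->; rewrite raddfD. Qed.

Lemma iter_raddfMn k c : {morph iter k f : x / x *+ c}.
Proof. by move=> x; elim: k => //= k ->; rewrite raddfMn. Qed.

Lemma iter_mulr_expn k c x :
  iter k f x = x *+ c -> forall j, iter (k * j)%N f x = x *+ (c ^ j)%N.
Proof.
move=> fx; elim=> [|j IH]; first by rewrite muln0.
by rewrite mulnS iterD IH iter_raddfMn fx -mulrnA -expnS.
Qed.

End IterAdditive.

Section Shift.
Variables (m n : nat).
Local Notation vec := (vec m n).
Local Notation T := (@Tmap m n).

Definition shift (a : vec) : vec := [ffun i => a (ordS i)].

Lemma shiftB : zmod_morphism shift.
Proof. by move=> a b; apply/ffunP=> i; rewrite !ffunE. Qed.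

HB.instance Definition _ := Algebra.isZmodMorphism.Build vec vec shift shiftB.

Lemma Tmap_shift a : T a = a + shift a.
Proof. by apply/ffunP=> i; rewrite !ffunE. Qed.

Lemma TmapB : zmod_morphism T.
Proof. by move=> a b; rewrite !Tmap_shift raddfB addrACA opprD. Qed.

HB.instance Definition _ := Algebra.isZmodMorphism.Build vec vec T TmapB.

Lemma val_iter_ordS k (i : 'I_n) : iter k (@ordS n) i = ((i + k) %% n)%N :> nat.
Proof.
elim: k => [|k IH]; first by rewrite addn0 modn_small.
by rewrite iterS /= IH -addn1 modnDml addn1 addnS.
Qed.

Lemma iter_shiftE k a i : iter k shift a i = a (iter k (@ordS n) i).
Proof. by elim: k a => [//|k IH] a; rewrite iterSr IH ffunE iterS. Qed.

Lemma iter_shift_dvd k a : (n %| k)%N -> iter k shift a = a.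
Proof.
move=> /eqP n_dvd_k; apply/ffunP=> i; rewrite iter_shiftE; congr (a _).
by apply: ord_inj; rewrite val_iter_ordS -modnDmr n_dvd_k addn0 modn_small.
Qed.

Lemma iterT_binomial k a :
  iter k T a = \sum_(j < k.+1) iter j shift a *+ 'C(k, j).
Proof.
elim: k => [|k IH]; first by rewrite big_ord_recl big_ord0 /= addr0.
rewrite iterS IH Tmap_shift raddf_sum [in RHS]big_ord_recl.
under [in RHS]eq_bigr => j _ do rewrite /bump /= add0n binS mulrnDr.
rewrite big_split /= [in LHS]big_ord_recl /= addrA bin0; congr (_ + _ + _).
  by rewrite [in RHS]big_ord_recr /= bin_small // mulr0n addr0.
by apply: eq_bigr => j _; rewrite raddfMn.
Qed.

Hypothesis m_gt1 : (1 < m)%N.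

Lemma vec_mulrn_mod (a : vec) c : a *+ c = a *+ (c %% m).
Proof.
have char_m (x : vec) : x *+ m = 0.
  by apply/ffunP=> i; rewrite ffunMnE ffunE -mulr_natr pchar_Zp // mulr0.
by rewrite {1}(divn_eq c m) mulrnDr mulrnA char_m add0r.
Qed.

Lemma iterT_prime a : prime m -> iter m T a = a + iter m shift a.
Proof.
move=> m_prime; have m_gt0 := prime_gt0 m_prime.
rewrite iterT_binomial big_ord_recr /= binn (bigD1 (Ordinal m_gt0)) //= bin0.
rewrite big1 ?addr0 // => j j_neq0; rewrite vec_mulrn_mod.
suff /eqP-> : (m %| 'C(m, j))%N by [].
apply: prime_dvd_bin; rewrite // ltn_ord andbT lt0n.
by apply: contraNneq j_neq0 => j0; apply/eqP/ord_inj.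
Qed.

End Shift.

Arguments shift {m n} a.

Section Invariants.
Variables (m n : nat).
Hypothesis m_gt1 : (1 < m)%N.
Local Notation vec := (vec m n).
Local Notation T := (@Tmap m n).

Definition vsum (a : vec) : 'Z_m := \sum_i a i.

Definition vmoment (a : vec) : 'Z_m := \sum_(i < n) i%:R * a i.

Lemma vsumD a b : vsum (a + b) = vsum a + vsum b.
Proof. by rewrite /vsum -big_split; apply: eq_bigr => i _; rewrite ffunE. Qed.

Lemma vsum_shift a : vsum (shift a) = vsum a.
Proof.
rewrite /vsum [RHS](reindex_inj (@ordS_inj n)).
by apply: eq_bigr => i _; rewrite ffunE.
Qed.

Lemma vsum_iterT k a : vsum (iter k T a) = 2 ^+ k * vsum a.
Proof.
elim: k => [|k IH]; first by rewrite mul1r.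
by rewrite iterS Tmap_shift vsumD vsum_shift IH exprS; ring.
Qed.

Lemma iterT_fix_exp2 Q b :
  vsum b \is a GRing.unit -> iter Q T b = b -> 2 ^+ Q = 1 :> 'Z_m.
Proof.
by move=> unit_b fixQ; apply: (mulIr unit_b); rewrite mul1r -vsum_iterT fixQ.
Qed.

Lemma vmomentD a b : vmoment (a + b) = vmoment a + vmoment b.
Proof.
by rewrite /vmoment -big_split; apply: eq_bigr => i _; rewrite ffunE mulrDr.
Qed.

Hypothesis m_dvd_n : (m %| n)%N.

(* The index n - 1 wraps around to 0, which is harmless because m divides n. *)
Lemma vmoment_shift a : vmoment a = vmoment (shift a) + vsum a.
Proof.
rewrite -(vsum_shift a) /vmoment /vsum [LHS](reindex_inj (@ordS_inj n)).
rewrite -big_split; apply: eq_bigr => i _ /=; rewrite !ffunE.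
by rewrite -Zp_nat_mod // modn_dvdm // Zp_nat_mod // -natr1 mulrDl mul1r.
Qed.

Lemma vmoment_iterT k a :
  2 * vmoment (iter k T a) = 2 ^+ k * (2 * vmoment a - k%:R * vsum a).
Proof.
elim: k => [|k IH]; first by rewrite expr0 mul1r mul0r subr0.
have vmoment_T b : vmoment (T b) = 2 * vmoment b - vsum b.
  by rewrite Tmap_shift vmomentD (vmoment_shift b); ring.
by rewrite iterS vmoment_T vsum_iterT mulrBr IH exprS -natr1; ring.
Qed.

Lemma iterT_fix_dvd Q b : vmoment b = 0 -> vsum b \is a GRing.unit ->
  iter Q T b = b -> (m %| Q)%N.
Proof.
move=> mom0 unit_b fixQ; have := vmoment_iterT Q b.
rewrite fixQ mom0 (iterT_fix_exp2 unit_b fixQ) mulr0 sub0r mul1r => /esym/eqP.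
rewrite oppr_eq0 -(mul0r (vsum b)) => /eqP/(mulIr unit_b) Q0.
by rewrite /dvdn -val_Zp_nat // Q0.
Qed.

Definition dvd_indicator : vec := [ffun i : 'I_n => ((m %| i)%N : nat)%:R].

Lemma vmoment_dvd_indicator : vmoment dvd_indicator = 0.
Proof.
rewrite /vmoment big1 // => i _; rewrite ffunE.
have [m_dvd_i|_] := boolP (m %| i)%N; last by rewrite mulr0.
by rewrite -Zp_nat_mod // (eqP m_dvd_i) mul0r.
Qed.

Lemma iter_shift_dvd_indicator : iter m shift dvd_indicator = dvd_indicator.
Proof.
apply/ffunP=> i; rewrite iter_shiftE !ffunE val_iter_ordS.
by rewrite /dvdn modn_dvdm // modnDr.
Qed.

Lemma vsum_dvd_indicator : vsum dvd_indicator = (n %/ m)%:R.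
Proof.
have m_gt0 : (0 < m)%N by apply: ltnW.
rewrite /vsum; under eq_bigr do rewrite ffunE.
rewrite -(big_mkord xpredT (fun i => ((m %| i)%N : nat)%:R)).
rewrite -{1}(divnK m_dvd_n) big_nat_mul (eq_bigr (fun=> 1)).
  by rewrite sumr_const_nat subn0.
move=> i _; rewrite big_ltn ?ltn_pmul2r // dvdn_mull // big_nat big1 /=.
  by rewrite addr0.
move=> j /andP[lo hi]; case: dvdnP => // -[q j_eq].
rewrite j_eq !ltn_pmul2r // in lo hi.
by rewrite ltnS leqNgt lo in hi.
Qed.

End Invariants.

Section OrderOfTwo.
Variables (p o : nat).
Hypotheses (p_prime : prime p) (p_ord2 : is_ord2 p o).

Let p_gt1 : (1 < p)%N := prime_gt1 p_prime.

Lemma Zp_exp2_eq1 k : (2 ^+ k == 1 :> 'Z_p) = (2 ^ k == 1 %[mod p])%N.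
Proof. by rewrite -natrX -val_eqE /= val_Zp_nat // Zp_cast. Qed.

Lemma ord2_gt0 : (0 < o)%N.
Proof. by case: p_ord2. Qed.

Lemma exp2_ord2 : 2 ^+ o = 1 :> 'Z_p.
Proof. by apply/eqP; rewrite Zp_exp2_eq1; case: p_ord2 => _ [/eqP]. Qed.

Lemma ord2_min k : (0 < k)%N -> 2 ^+ k = 1 :> 'Z_p -> (o <= k)%N.
Proof.
case: p_ord2 => _ [_ min_o] k_gt0 /eqP.
by rewrite Zp_exp2_eq1 => /eqP; apply: min_o.
Qed.

Lemma ord2_dvd Q : 2 ^+ Q = 1 :> 'Z_p -> (o %| Q)%N.
Proof.
move=> expQ; have expR : 2 ^+ (Q %% o) = 1 :> 'Z_p.
  move: expQ; rewrite {1}(divn_eq Q o) exprD mulnC exprM exp2_ord2.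
  by rewrite expr1n mul1r.
rewrite /dvdn; case: posnP => // R_gt0.
by have := ord2_min R_gt0 expR; rewrite leqNgt ltn_pmod ?ord2_gt0.
Qed.

Lemma ord2_lt : (o < p)%N.
Proof.
have unit2 : (2 : 'Z_p) \is a GRing.unit.
  by rewrite -(unitrX_pos _ ord2_gt0) exp2_ord2 unitr1.
have fermat : 2 ^+ p = 2 :> 'Z_p.
  by rewrite -natrX -Zp_nat_mod // fermat_little // Zp_nat_mod.
have : 2 ^+ p.-1 = 1 :> 'Z_p.
  by apply: (mulrI unit2); rewrite mulr1 -exprS prednK ?prime_gt0.
have pred_gt0 : (0 < p.-1)%N by rewrite -ltnS prednK ?prime_gt0.
move/(ord2_min pred_gt0)/leq_ltn_trans; apply.
by rewrite ltn_predL prime_gt0.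
Qed.

Lemma coprime_ord2 : coprime p o.
Proof.
rewrite prime_coprime //; apply/negP=> /(dvdn_leq ord2_gt0).
by rewrite leqNgt ord2_lt.
Qed.

End OrderOfTwo.

Section OddPrime.
Variables (p o n : nat).
Hypotheses (p_prime : prime p) (p_gt2 : (2 < p)%N) (p_ord2 : is_ord2 p o).
Hypotheses (p_dvd_n : (p %| n)%N) (n_dvd_2p : (n %| 2 * p)%N).
Local Notation T := (@Tmap p n).

Let p_gt1 : (1 < p)%N := prime_gt1 p_prime.

Lemma iterT_double a : iter (p + p)%N T a = iter p T a *+ 2.
Proof.
rewrite iterD !iterT_prime // iter_raddfD -iterD.
rewrite (@iter_shift_dvd _ _ (p + p)%N).
  by rewrite [iter p shift a + a]addrC mulr2n.
by rewrite addnn -mul2n.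
Qed.

Lemma iterT_fix_of_double x : iter p T x = x *+ 2 -> iter (p * o)%N T x = x.
Proof.
move/iter_mulr_expn->; rewrite vec_mulrn_mod //.
by case: p_ord2 => _ [-> _]; rewrite -vec_mulrn_mod.
Qed.

Lemma iterT_eventually_periodic (a : vec p n) : eventually_periodic a (p * o)%N.
Proof.
exists p => k le_pk; rewrite -(subnK le_pk) -addnA (addnC p) !iterD.
by rewrite iterT_fix_of_double // -iterD iterT_double.
Qed.

Lemma is_Pmax_dvd_2p : is_Pmax p n (p * o)%N.
Proof.
set w := dvd_indicator p n.
have fix_w : iter (p * o)%N T w = w.
  apply: iterT_fix_of_double.
  by rewrite iterT_prime // iter_shift_dvd_indicator // mulr2n.
have unit_w : vsum w \is a GRing.unit.
  rewrite vsum_dvd_indicator // unitZpE //.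
  have coprime_p2 : coprime p 2.
    by rewrite prime_coprime // gtnNdvd.
  apply: coprime_dvdr coprime_p2.
  by rewrite -(dvdn_pmul2r (prime_gt0 p_prime)) divnK.
apply: (is_Pmax_intro (b := w)) => //.
- by rewrite muln_gt0 prime_gt0 ?(ord2_gt0 p_ord2).
- exact: iterT_eventually_periodic.
move=> Q Q_gt0 fixQ; rewrite Gauss_dvd ?coprime_ord2 //.
have mom_w : vmoment w = 0 by apply: vmoment_dvd_indicator.
rewrite (iterT_fix_dvd p_gt1 p_dvd_n mom_w unit_w fixQ) /=.
exact: ord2_dvd p_prime p_ord2 Q (iterT_fix_exp2 unit_w fixQ).
Qed.

End OddPrime.

Local Close Scope ring_scope.

Theorem proposition7p2 (p o : nat) :
  prime p -> (2 < p)%N -> is_ord2 p o ->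
  is_Pmax p (2 * p) (p * o) /\ is_Pmax p p (p * o).
Proof.
move=> p_prime p_gt2 p_ord2.
have p_dvd_2p : p %| 2 * p := dvdn_mull 2 (dvdnn p).
by split; apply: is_Pmax_dvd_2p.
Qed.
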